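(* Let $(f_n)_{n\in\mathbb{N}}$ be a family of polynomials over $\mathbb{C}$, $f_n$ in $n$ variables, of degree at most $\mathrm{poly}(n)$, such that $f_n$ has a constant-free arithmetic circuit of size at most $\mathrm{poly}(n)$. Then $f_n$ has a constant-free almost-MD arithmetic circuit of size at most $\mathrm{poly}(n)$.
   Context: An arithmetic circuit has input nodes labeled by variables or constants and internal addition and multiplication gates (fan-in two for multiplication); size is the number of edges/gates. It is constant-free if its only constant inputs are $0,1,-1$. A gate $v$ is constant producing if every input node of the subcircuit rooted at $v$ is a field constant. A circuit is almost-MD if every multiplication gate either multiplies two disjoint subcircuits or has at least one child that is constant producing. *)

From mathcomp Require Import all_boot all_algebra.
From mathcomp Require Import Rstruct.
From mathcomp Require Import complex.
From mathcomp Require Import mpoly.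
Import GRing.Theory.

Set Implicit Arguments. Unset Strict Implicit. Unset Printing Implicit Defensive.
Local Open Scope ring_scope.

Definition CC : fieldType := complex Rdefinitions.R.

(* Total degree of a multivariate polynomial (degree of 0 is 0). *)
Definition mdegree (n : nat) (p : {mpoly CC[n]}) : nat := (msize p).-1.

(* Children are referred to by their (nat) index in the circuit, which must be
   strictly smaller than the index of the gate (topological order). *)
Inductive gate (n : nat) : Type :=
| GVar of 'I_n
| GConst of CC
| GAdd of seq nat
| GMul of nat & nat.

(* A circuit is the list of its gates in topological order; the output is the
   last gate. *)
Definition circuit (n : nat) := seq (gate n).

Definition gate_at n (c : circuit n) (i : nat) : gate n := nth (GConst n 0) c i.

Definition children n (g : gate n) : seq nat :=
  match g with
  | GVar _ | GConst _ => [::]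
  | GAdd s => s
  | GMul a b => [:: a; b]
  end.

Definition well_formed n (c : circuit n) : bool :=
  (0 < size c)%N &&
  all (fun i => all (fun j => (j < i)%N) (children (gate_at c i))) (iota 0 (size c)).

Definition csize n (c : circuit n) : nat :=
  (size c + \sum_(g <- c) size (children g))%N.

Definition gate_val n (vals : seq {mpoly CC[n]}) (g : gate n) : {mpoly CC[n]} :=
  match g with
  | GVar i => 'X_i
  | GConst a => a%:MP
  | GAdd s => \sum_(j <- s) nth 0 vals j
  | GMul a b => nth 0 vals a * nth 0 vals b
  end.

Definition circuit_vals n (c : circuit n) : seq {mpoly CC[n]} :=
  foldl (fun vals g => rcons vals (gate_val vals g)) [::] c.

Definition output n (c : circuit n) : {mpoly CC[n]} :=
  nth 0 (circuit_vals c) (size c).-1.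

Definition computes n (c : circuit n) (f : {mpoly CC[n]}) : Prop :=
  well_formed c /\ output c = f.

Definition constant_free n (c : circuit n) : Prop :=
  forall i, (i < size c)%N -> forall a, gate_at c i = GConst n a ->
    a = 0 \/ a = 1 \/ a = -1.

(* j is a node of the subcircuit rooted at v (reflexive-transitive closure of
   the child relation). *)
Fixpoint in_sub_fuel n (c : circuit n) (fuel v j : nat) : bool :=
  match fuel with
  | 0 => false
  | S f => (j == v) || has (fun k => in_sub_fuel c f k j) (children (gate_at c v))
  end.

(* in a well-formed circuit children have smaller indices, so fuel v.+1 suffices *)
Definition in_sub n (c : circuit n) (v j : nat) : bool := in_sub_fuel c v.+1 v j.

Definition is_var n (g : gate n) : bool := if g is GVar _ then true else false.

Definition constant_producing n (c : circuit n) (v : nat) : Prop :=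
  forall j, in_sub c v j -> ~~ is_var (gate_at c j).

Definition disjoint_sub n (c : circuit n) (a b : nat) : Prop :=
  forall j, in_sub c a j -> in_sub c b j -> False.

Definition almost_MD n (c : circuit n) : Prop :=
  forall v a b, (v < size c)%N -> gate_at c v = GMul n a b ->
    disjoint_sub c a b \/ constant_producing c a \/ constant_producing c b.

From mathcomp Require Import all_boot all_algebra.
From mathcomp Require Import mpoly.
From mathcomp Require Import zify.
Import GRing.Theory.
Set Implicit Arguments. Unset Strict Implicit. Unset Printing Implicit Defensive.

(* Homogenize the circuit up to the degree bound D.  For every old gate a,
   degree i and offset k with i + k <= D, a new gate computes the degree-i
   component of a; a product x * y is expanded as the sum over t <= i of the
   degree-t component of x times the degree-(i - t) component of y.  Each new
   gate of degree i is attached to the interval [k, k + max(i, 1)), and the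
   second factor of a product is placed right after the first one.  Intervals
   only shrink down a subcircuit and every node owns at least a unit interval,
   so the two factors of a product are either disjoint subcircuits or one of
   them has degree 0, and is then constant producing since variables have
   degree 1.  No new constants appear, and the blow-up is O(D^3) copies of
   each gate with O(D + size) inputs each, which is polynomial. *)

Section CircuitValues.
Variable n : nat.
Implicit Types (c : circuit n) (g : gate n) (s : seq {mpoly CC[n]}).
Local Open Scope ring_scope.

Definition topological c := forall p, (p < size c)%N ->
  {in children (gate_at c p), forall j, (j < p)%N}.

Lemma well_formed_topological c : well_formed c -> topological c.
Proof.
case/andP=> _ /allP wf p hp j.
by have := wf p; rewrite mem_iota add0n hp => /(_ isT) /allP; apply.
Qed.

Lemma circuit_vals_rcons c g :
  circuit_vals (rcons c g) = rcons (circuit_vals c) (gate_val (circuit_vals c) g).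
Proof. by rewrite /circuit_vals foldl_rcons. Qed.

Lemma size_circuit_vals c : size (circuit_vals c) = size c.
Proof.
by elim/last_ind: c => [//|c g IH]; rewrite circuit_vals_rcons !size_rcons IH.
Qed.

Lemma circuit_vals_take c p : circuit_vals (take p c) = take p (circuit_vals c).
Proof.
elim/last_ind: c p => [//|c g IH] p.
rewrite circuit_vals_rcons -!cats1 !take_cat size_circuit_vals.
case: ltnP => hp; first exact: IH.
by case: (p - size c)%N => [|m] /=; rewrite ?cats0 // !cats1 circuit_vals_rcons.
Qed.

Lemma nth_circuit_vals c p : (p < size c)%N ->
  nth 0 (circuit_vals c) p = gate_val (take p (circuit_vals c)) (gate_at c p).
Proof.
move=> hp; rewrite -[LHS](nth_take 0 (ltnSn p)) -!circuit_vals_take.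
rewrite (take_nth (GConst n 0) hp) circuit_vals_rcons nth_rcons size_circuit_vals.
by rewrite size_take hp ltnn eqxx.
Qed.

Lemma eq_gate_val s s' g : {in children g, forall j, nth 0 s j = nth 0 s' j} ->
  gate_val s g = gate_val s' g.
Proof.
case: g => [x|a|l|a b] /= ss' //; first exact: eq_big_seq.
by rewrite !ss' // !inE eqxx ?orbT.
Qed.

Lemma nth_circuit_vals_gate c p : topological c -> (p < size c)%N ->
  nth 0 (circuit_vals c) p = gate_val (circuit_vals c) (gate_at c p).
Proof.
move=> topc hp; rewrite nth_circuit_vals //; apply: eq_gate_val => j /(topc p hp) hjp.
exact: nth_take.
Qed.

Lemma circuit_valsE c (w : nat -> {mpoly CC[n]}) : topological c ->
  (forall p s, (p < size c)%N -> {in children (gate_at c p), forall j, nth 0 s j = w j} ->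
     gate_val s (gate_at c p) = w p) ->
  forall p, (p < size c)%N -> nth 0 (circuit_vals c) p = w p.
Proof.
move=> topc hw; elim/ltn_ind=> p IH hp; rewrite nth_circuit_vals //.
apply: hw => // j /(topc p hp) hjp.
by rewrite nth_take // IH // (ltn_trans hjp).
Qed.

End CircuitValues.

Section CircuitSize.
Variable n : nat.
Implicit Type c : circuit n.

Lemma size_children_le_csize c a : size (children (gate_at c a)) <= csize c.
Proof.
have [ha|ha] := ltnP a (size c); last by rewrite /gate_at nth_default.
rewrite /csize (big_nth (GConst n 0)) (bigD1_seq a) ?mem_index_iota ?iota_uniq //=.
by rewrite /gate_at; lia.
Qed.

Lemma csize_le c B : (forall p, p < size c -> size (children (gate_at c p)) <= B) ->
  csize c <= size c * B.+1.
Proof.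
move=> hB; rewrite /csize mulnSr addnC leq_add2r (big_nth (GConst n 0)).
rewrite -[X in _ <= X * _]subn0 -sum_nat_const_nat big_nat_cond [X in _ <= X]big_nat_cond.
by apply: leq_sum => p /andP [/andP [_ hp] _]; apply: hB.
Qed.

End CircuitSize.

Section IntervalLabelling.
Variables (n : nat) (c : circuit n) (deg off : nat -> nat).

Definition label_le q p := [/\ deg q <= deg p, off p <= off q &
  off q + maxn (deg q) 1 <= off p + maxn (deg p) 1].

Hypothesis label_children :
  forall p, {in children (gate_at c p), forall j, label_le j p}.
Hypothesis deg_var : forall p, is_var (gate_at c p) -> 0 < deg p.
Hypothesis deg_mul : forall p a b, gate_at c p = GMul n a b ->
  [\/ deg a = 0, deg b = 0 | off a + deg a <= off b].

Lemma in_sub_label_le v j : in_sub c v j -> label_le j v.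
Proof.
rewrite /in_sub; move: v.+1 => f; elim: f v => [//|f IH] v /=.
case/orP=> [/eqP ->|/hasP [k /label_children [h1 h2 h3] /IH [h4 h5 h6]]].
  by split.
by split; [exact: leq_trans h1 | exact: leq_trans h5 | exact: leq_trans h3].
Qed.

Lemma deg0_constant_producing v : deg v = 0 -> constant_producing c v.
Proof.
move=> v0 j /in_sub_label_le [+ _ _]; rewrite v0 leqn0 => /eqP j0.
by apply/negP => /deg_var; rewrite j0.
Qed.

(* A node shared by the subcircuits of a and b would own a unit interval
   inside both [off a, off a + deg a) and [off b, ...). *)
Lemma almost_MD_of_labelling : almost_MD c.
Proof.
move=> v a b _ /deg_mul [a0|b0|sep].
- by right; left; apply: deg0_constant_producing.
- by right; right; apply: deg0_constant_producing.
have [a0|apos] := posnP (deg a); first by right; left; apply: deg0_constant_producing.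
left=> j /in_sub_label_le [_ _ ja] /in_sub_label_le [_ jb _].
by move: ja sep jb; rewrite (maxn_idPl apos); lia.
Qed.

End IntervalLabelling.

Section HomogeneousComponents.
Variables (n : nat) (R : comRingType).
Local Open Scope ring_scope.
Local Notation hc i p := (pihomog mdeg i p).
Implicit Types p q : {mpoly R[n]}.

Lemma pihomogM_homog a b p q i :
  hc i (hc a p * hc b q) = if (a + b == i)%N then hc a p * hc b q else 0.
Proof.
have hom : hc a p * hc b q \is (a + b)%N.-homog by apply: dhomogM; apply: pihomogP.
case: eqP => [<-|ne]; first exact: pihomog_dE.
by apply: (pihomog_ne0 _ hom); apply/eqP.
Qed.

Lemma pihomogM i p q : hc i (p * q) = \sum_(j < i.+1) hc j p * hc (i - j)%N q.
Proof.
pose K := (msize p + msize q + i).+1.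
rewrite {1}(pihomog_partitionE (k := K) (mf := mdeg) (p := p)); last by rewrite /K; lia.
rewrite {1}(pihomog_partitionE (k := K) (mf := mdeg) (p := q)); last by rewrite /K; lia.
rewrite big_distrl raddf_sum /= (big_ord_widen K (fun j => hc j p * hc (i - j)%N q));
  last by rewrite /K; lia.
rewrite [RHS]big_mkcond; apply: eq_bigr => a _ /=.
rewrite big_distrr raddf_sum /=.
under eq_bigr => b _ do rewrite pihomogM_homog.
case: (leqP (a : nat) i) => hai; rewrite ltnS ?hai; last first.
  by rewrite leqNgt hai big1 // => b _; rewrite ifN //; apply/eqP; lia.
have hb : (i - a < K)%N by rewrite /K; lia.
rewrite (bigD1 (Ordinal hb)) //= subnKC // eqxx big1 ?addr0 // => b hba.
rewrite ifN //; apply: contra hba => /eqP hab; apply/eqP/val_inj => /=; lia.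
Qed.

Lemma pihomogC i (v : R) :
  hc i (v%:MP : {mpoly R[n]}) = if i == 0%N then v%:MP else 0.
Proof.
rewrite -alg_mpolyC linearZ /=; case: eqP => [->|/eqP i0].
  by rewrite pihomog_dE // dhomog1.
by rewrite (pihomog_ne0 _ (dhomog1 _ _)) ?scaler0 // eq_sym.
Qed.

Lemma pihomog_mX i (x : 'I_n) :
  hc i ('X_x : {mpoly R[n]}) = if i == 1%N then 'X_x else 0.
Proof. by rewrite pihomogX -[Measure.sort _ _]/(mdeg (mnm1 x)) mdeg1 eq_sym. Qed.

End HomogeneousComponents.

Lemma ltn_digit q q' d m : q < q' -> m < d -> q * d + m < q' * d.
Proof.
move=> qq md; apply: (@leq_trans (q.+1 * d)); first by rewrite mulSn addnC ltn_add2r.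
by rewrite leq_mul2r qq orbT.
Qed.

Section Slots.
Variable D : nat.

Definition slot a i k t := ((a * D.+1 + i) * D.+1 + k) * D.+2 + t.
Definition unslot p :=
  (p %/ D.+2 %/ D.+1 %/ D.+1, p %/ D.+2 %/ D.+1 %% D.+1, p %/ D.+2 %% D.+1, p %% D.+2).
Definition slots_per_gate := D.+1 * D.+1 * D.+2.

Lemma slotK a i k t : i <= D -> k <= D -> t <= D.+1 -> unslot (slot a i k t) = (a, i, k, t).
Proof.
move=> hi hk ht; have divmod q m d : m < d -> (q * d + m) %/ d = q /\ (q * d + m) %% d = m.
  by move=> md; rewrite divnMDl ?divn_small ?addn0 ?modnMDl ?modn_small //; lia.
rewrite /unslot /slot.
have [-> ->] := divmod ((a * D.+1 + i) * D.+1 + k) t D.+2 ht.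
have [-> ->] := divmod (a * D.+1 + i) k D.+1 hk.
by have [-> ->] := divmod a i D.+1 hi.
Qed.

Lemma slot_lt a i k t : i <= D -> k <= D -> t <= D.+1 -> slot a i k t < a.+1 * slots_per_gate.
Proof.
move=> hi hk ht; rewrite /slot /slots_per_gate !mulnA.
by apply: ltn_digit => //; apply: ltn_digit => //; apply: ltn_digit.
Qed.

Lemma slot_lt_slot b i k t a i' k' t' : b < a ->
  i <= D -> k <= D -> t <= D.+1 -> slot b i k t < slot a i' k' t'.
Proof.
move=> ba hi hk ht; apply: leq_trans (slot_lt b hi hk ht) _.
rewrite /slot /slots_per_gate !mulnDl -!addnA -!mulnA.
by apply: leq_trans (leq_addr _ _); rewrite leq_mul2r ba orbT.
Qed.

Lemma slot_surj s p : p < s * slots_per_gate -> exists a i k t,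
  [/\ p = slot a i k t, a < s, i <= D, k <= D & t <= D.+1].
Proof.
move=> ps; exists (p %/ D.+2 %/ D.+1 %/ D.+1), (p %/ D.+2 %/ D.+1 %% D.+1),
  (p %/ D.+2 %% D.+1), (p %% D.+2).
split; try by rewrite -ltnS ltn_pmod.
  by rewrite /slot -!divn_eq.
by rewrite -!divnMA ltn_divLR // [D.+2 * _]mulnC.
Qed.

End Slots.

Section Homogenization.
Variables (n : nat) (c : circuit n) (D : nat).

Local Notation slot := (slot D).
Local Notation N := (size c * slots_per_gate D).

(* Slot (a, i, k, D+1) computes the degree-i component of gate a, attached to
   the interval [k, k + max(i, 1)).  For a product gate a = x * y, slot
   (a, i, k, t) with t <= i multiplies the degree-t component of x at offset k
   by the degree-(i - t) component of y at offset k + t; when the latter has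
   degree 0 it stays at offset k, so that its unit interval fits in [k, k + i). *)
Definition hgate (a i k t : nat) : gate n :=
  if D < i + k then GConst n 0 else
  if t == D.+1 then
    match gate_at c a with
    | GVar x => if i == 1 then GVar x else GConst n 0
    | GConst v => if i == 0 then GConst n v else GConst n 0
    | GAdd l => GAdd n [seq slot b i k D.+1 | b <- l]
    | GMul _ _ => GAdd n [seq slot a i k j | j <- iota 0 i.+1]
    end
  else
    match gate_at c a with
    | GMul x y =>
        if t <= i then GMul n (slot x t k D.+1) (slot y (i - t) (if t < i then k + t else k) D.+1)
        else GConst n 0
    | _ => GConst n 0
    end.

Definition hout : gate n := GAdd n [seq slot (size c).-1 i 0 D.+1 | i <- iota 0 D.+1].

Definition homogenized : circuit n :=
  rcons (mkseq (fun p => let: (a, i, k, t) := unslot D p in hgate a i k t) N) hout.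

Definition hdeg p := if p < N then (unslot D p).1.1.2 else D.
Definition hoff p := if p < N then (unslot D p).1.2 else 0.

Lemma size_homogenized : size homogenized = N.+1.
Proof. by rewrite size_rcons size_mkseq. Qed.

Variant homogenized_gate_spec p : gate n -> Prop :=
  | SlotGate a i k t of p = slot a i k t & a < size c & i <= D & k <= D & t <= D.+1 :
      homogenized_gate_spec p (hgate a i k t)
  | OutputGate of p = N : homogenized_gate_spec p hout
  | NoGate of N < p : homogenized_gate_spec p (GConst n 0).

Lemma gate_homogenizedP p : homogenized_gate_spec p (gate_at homogenized p).
Proof.
rewrite /gate_at nth_rcons size_mkseq; case: ltnP => [pN|Np]; last first.
  by case: eqP => [->|/eqP pN]; constructor; rewrite // ltn_neqAle eq_sym pN.
rewrite nth_mkseq //; have [a [i [k [t [-> ha hi hk ht]]]]] := slot_surj pN.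
by rewrite slotK //; constructor.
Qed.

Lemma hgate_const a i k t v : hgate a i k t = GConst n v -> v = 0%R \/ gate_at c a = GConst n v.
Proof.
rewrite /hgate; case: ltnP => _; first by case=> <-; left.
by case: eqP => _; case: (gate_at c a) => [x|w|l|x y]; try case: ifP => _;
  case=> // <-; by [left | right].
Qed.

Lemma homogenized_constant_free : constant_free c -> constant_free homogenized.
Proof.
move=> cf p _ v; case: gate_homogenizedP => [a i k t _ ha _ _ _|_|_]; [|by case|by case=> <-; left].
by case/hgate_const => [->|/(cf a ha)]; first left.
Qed.

Lemma csize_homogenized : csize homogenized <= N.+1 * (D.+3 + csize c).
Proof.
rewrite -size_homogenized addSn; apply: csize_le => p _.
case: gate_homogenizedP => [a i k t _ ha hi hk ht|_|_] //; cbn [children hgate hout]; last first.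
  by rewrite size_map size_iota; lia.
rewrite /hgate; case: ltnP => // _; case: eqP => _.
  case E: (gate_at c a) => [x|v|l|x y]; cbn [children]; try by case: ifP.
    by have := size_children_le_csize c a; rewrite E; cbn [children]; rewrite size_map; lia.
  by rewrite size_map size_iota; lia.
by case: (gate_at c a) => // x y; case: ifP.
Qed.

Lemma slot_lt_size a i k t : a < size c -> i <= D -> k <= D -> t <= D.+1 -> slot a i k t < N.
Proof.
move=> ha hi hk ht; apply: leq_trans (slot_lt a hi hk ht) _.
by rewrite leq_mul2r ha orbT.
Qed.

Lemma hdeg_slot a i k t : a < size c -> i <= D -> k <= D -> t <= D.+1 -> hdeg (slot a i k t) = i.
Proof. by move=> ha hi hk ht; rewrite /hdeg slot_lt_size // slotK. Qed.

Lemma hoff_slot a i k t : a < size c -> i <= D -> k <= D -> t <= D.+1 -> hoff (slot a i k t) = k.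
Proof. by move=> ha hi hk ht; rewrite /hoff slot_lt_size // slotK. Qed.

Lemma label_le_slot b i k t a i' k' t' :
    b < size c -> i <= D -> k <= D -> t <= D.+1 ->
    a < size c -> i' <= D -> k' <= D -> t' <= D.+1 ->
    i <= i' -> k' <= k -> k + maxn i 1 <= k' + maxn i' 1 ->
  label_le hdeg hoff (slot b i k t) (slot a i' k' t').
Proof. by move=> hb hi hk ht ha hi' hk' ht'; rewrite /label_le !hdeg_slot ?hoff_slot. Qed.

Lemma hgate_var a i k t : is_var (hgate a i k t) -> i = 1.
Proof.
rewrite /hgate; case: ltnP => // _.
by case: eqP => _; case: (gate_at c a) => [x|v|l|x y] //=; case: ifP => // /eqP.
Qed.

Lemma hgate_mul a i k t u v : hgate a i k t = GMul n u v ->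
  exists x y, [/\ gate_at c a = GMul n x y, i + k <= D, t <= i,
    u = slot x t k D.+1 & v = slot y (i - t) (if t < i then k + t else k) D.+1].
Proof.
rewrite /hgate; case: ltnP => // hik; case: eqP => _.
  by case: (gate_at c a) => [x|w|l|x y]; try case: ifP; move=> *; discriminate.
by case: (gate_at c a) => // x y; case: ifP => // hti [<- <-]; exists x, y.
Qed.

Hypothesis c_topological : topological c.

Lemma children_gate_lt a : a < size c ->
  {in children (gate_at c a), forall b, b < size c /\ b < a}.
Proof. by move=> ha b /(c_topological ha) ba; split=> //; apply: ltn_trans ha. Qed.

Lemma children_hgate a i k t : a < size c -> i <= D -> k <= D -> t <= D.+1 ->
  {in children (hgate a i k t), forall j, j < slot a i k t /\ label_le hdeg hoff j (slot a i k t)}.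
Proof.
move=> ha hi hk ht j; rewrite /hgate; case: ltnP => // hik.
have lt_a := children_gate_lt ha.
case: eqP => [tD|_]; case E: (gate_at c a) lt_a => [x|v|l|x y] lt_a //.
- by case: ifP.
- by case: ifP.
- case/mapP=> b /lt_a [hb ba] ->.
  by split; [apply: slot_lt_slot | apply: label_le_slot => //; lia].
- case/mapP=> t'; rewrite mem_iota => /andP [_ ht'] ->.
  by split; [rewrite /slot ltn_add2l; lia | apply: label_le_slot => //; lia].
have [[hx xa] [hy ya]] := (lt_a x (mem_head _ _), lt_a y (mem_last x [:: y])).
case: ifP => // hti; rewrite !inE => /orP [] /eqP ->.
  by split; [apply: slot_lt_slot => //; lia | apply: label_le_slot => //; lia].
by case: (ltnP t i) => hti';
  (split; [apply: slot_lt_slot => //; lia | apply: label_le_slot => //; lia]).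
Qed.

Hypothesis c_nonempty : 0 < size c.

Lemma homogenized_children p :
  {in children (gate_at homogenized p), forall j, j < p /\ label_le hdeg hoff j p}.
Proof.
case: gate_homogenizedP => [a i k t -> ha hi hk ht|->|//]; first exact: children_hgate.
have hlast : (size c).-1 < size c by rewrite prednK.
move=> j /mapP [i]; rewrite mem_iota => /andP [_ hi] ->.
have hiD : i <= D by lia.
split; first exact: slot_lt_size.
rewrite /label_le hdeg_slot ?hoff_slot //.
by rewrite /hdeg /hoff ltnn; split=> //; lia.
Qed.

Lemma homogenized_topological : topological homogenized.
Proof. by move=> p _ j /homogenized_children []. Qed.

Lemma homogenized_well_formed : well_formed homogenized.
Proof.
apply/andP; split; first by rewrite size_homogenized.
by apply/allP => p _; apply/allP => j /homogenized_children [].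
Qed.

Lemma homogenized_almost_MD : almost_MD homogenized.
Proof.
apply: (almost_MD_of_labelling (deg := hdeg) (off := hoff)).
- by move=> p j /homogenized_children [].
- move=> p; case: gate_homogenizedP => // a i k t -> ha hi hk ht /hgate_var i1.
  by rewrite hdeg_slot // i1.
move=> p u v; case: gate_homogenizedP => // a i k t _ ha hi hk ht.
case/hgate_mul=> x [y [E hik hti -> ->]].
have lt_a := children_gate_lt ha; rewrite E in lt_a.
have [[hx _] [hy _]] := (lt_a x (mem_head _ _), lt_a y (mem_last x [:: y])).
case: (ltnP t i) => hti'; rewrite !hdeg_slot ?hoff_slot //=; try lia.
  by constructor; lia.
by constructor; lia.
Qed.

Local Open Scope ring_scope.
Local Notation hc i p := (pihomog mdeg i p).
Local Notation val a := (nth 0 (circuit_vals c) a).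

Definition hval a i k t : {mpoly CC[n]} :=
  if (D < i + k)%N then 0 else if t == D.+1 then hc i (val a) else
  match gate_at c a with
  | GMul x y => if (t <= i)%N then hc t (val x) * hc (i - t) (val y) else 0
  | _ => 0
  end.

Definition hvals p :=
  if (p < N)%N then let: (a, i, k, t) := unslot D p in hval a i k t else output c.

Lemma hval_component a i k : (i + k <= D)%N -> hval a i k D.+1 = hc i (val a).
Proof. by move=> hik; rewrite /hval ltnNge hik eqxx. Qed.

Lemma hvals_slot a i k t : (a < size c)%N -> (i <= D)%N -> (k <= D)%N -> (t <= D.+1)%N ->
  hvals (slot a i k t) = hval a i k t.
Proof. by move=> ha hi hk ht; rewrite /hvals slot_lt_size // slotK. Qed.

Lemma gate_val_hgate a i k t s :
    (a < size c)%N -> (i <= D)%N -> (k <= D)%N -> (t <= D.+1)%N ->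
    {in children (hgate a i k t), forall j, nth 0 s j = hvals j} ->
  gate_val s (hgate a i k t) = hval a i k t.
Proof.
move=> ha hi hk ht; rewrite /hgate /hval; case: ltnP => hik; first by rewrite /= mpolyC0.
have lt_a := children_gate_lt ha; rewrite (nth_circuit_vals_gate c_topological ha).
case: eqP => _; case E: (gate_at c a) lt_a => [x|v|l|x y] lt_a hs; cbn [gate_val];
  rewrite ?mpolyC0 //.
- by rewrite pihomog_mX; case: ifP; rewrite ?mpolyC0.
- by rewrite pihomogC; case: ifP; rewrite ?mpolyC0.
- rewrite big_map raddf_sum; apply: eq_big_seq => b hb; have [hbc _] := lt_a b hb.
  by rewrite hs ?hvals_slot ?hval_component //; apply/mapP; exists b.
- rewrite big_map pihomogM -(big_mkord xpredT (fun j => hc j (val x) * hc (i - j) (val y))).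
  rewrite /index_iota subn0; apply: eq_big_seq => j; rewrite mem_iota => /andP [_ hj].
  rewrite hs; last by apply/mapP; exists j; rewrite ?mem_iota.
  rewrite hvals_slot //; last by lia.
  by rewrite /hval ltnNge hik E ifN ?ifT //; lia.
have [[hx _] [hy _]] := (lt_a x (mem_head _ _), lt_a y (mem_last x [:: y])).
case: ifP hs => hti hs; cbn [gate_val]; last by rewrite mpolyC0.
rewrite (hs _ (mem_head _ _)) (hs _ (mem_last _ [:: _])) !hvals_slot //;
  try by case: (ltnP t i); lia.
by rewrite !hval_component //; case: (ltnP t i); lia.
Qed.

Lemma homogenized_vals : (msize (output c) <= D.+1)%N ->
  forall p, (p < N.+1)%N -> nth 0 (circuit_vals homogenized) p = hvals p.
Proof.
move=> degc; rewrite -size_homogenized; apply: circuit_valsE; first exact: homogenized_topological.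
move=> p s; rewrite size_homogenized ltnS => hp.
case: gate_homogenizedP => [a i k t -> ha hi hk ht|->|]; last by lia.
  by rewrite hvals_slot //; apply: gate_val_hgate.
have hlast : ((size c).-1 < size c)%N by rewrite prednK.
move=> hs; rewrite /hvals ltnn [RHS](pihomog_partitionE (k := D.+1) (mf := mdeg) degc).
cbn [gate_val hout]; rewrite big_map -(big_mkord xpredT (fun i => hc i (output c))).
rewrite /index_iota subn0; apply: eq_big_seq => i; rewrite mem_iota => /andP [_ hi].
rewrite hs; last by apply/mapP; exists i; rewrite ?mem_iota.
by rewrite hvals_slot ?hval_component //; lia.
Qed.

Lemma output_homogenized : (msize (output c) <= D.+1)%N -> output homogenized = output c.
Proof. by move=> degc; rewrite {1}/output size_homogenized homogenized_vals // /hvals ltnn. Qed.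

End Homogenization.

Lemma leq_expn2r m n e : m <= n -> m ^ e <= n ^ e.
Proof. by case: e => [//|e] mn; rewrite leq_exp2r. Qed.

Definition poly_bounded (u : nat -> nat) := exists C e, forall n, u n <= C * (n + 1) ^ e.

Lemma poly_bounded_leq_expn_add u : poly_bounded u -> exists k, forall n, u n <= n ^ k + k.
Proof.
move=> [C [e hu]]; exists (e.+1 + C * (C * 2 ^ e).+1 ^ e) => n; apply: leq_trans (hu n) _.
have [/andP [n0 large]|small] := boolP ((0 < n) && (C * 2 ^ e <= n)).
  apply: leq_trans (leq_addr _ _); apply: (@leq_trans (C * 2 ^ e * n ^ e)).
    by rewrite -mulnA leq_mul2l -expnMn leq_expn2r ?orbT //; lia.
  apply: (@leq_trans (n ^ e.+1)); first by rewrite expnS leq_mul2r large orbT.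
  by rewrite leq_pexp2l // leq_addr.
apply: leq_trans (leq_addl _ _); apply: leq_trans (leq_addl _ _).
by rewrite leq_mul2l leq_expn2r ?orbT //; lia.
Qed.

Lemma poly_bounded_le u v : (forall n, u n <= v n) -> poly_bounded v -> poly_bounded u.
Proof. by move=> uv [C [e hv]]; exists C, e => n; apply: leq_trans (hv n). Qed.

Lemma poly_boundedD u v : poly_bounded u -> poly_bounded v -> poly_bounded (fun n => u n + v n).
Proof.
move=> [C [e hu]] [C' [e' hv]]; exists (C + C'), (e + e') => n.
have le_e f : f <= e + e' -> (n + 1) ^ f <= (n + 1) ^ (e + e').
  by move=> ?; rewrite leq_pexp2l // addn1.
rewrite mulnDl leq_add // (leq_trans (hu n), leq_trans (hv n)) //.
  by rewrite leq_mul2l le_e ?orbT ?leq_addr.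
by rewrite leq_mul2l le_e ?orbT ?leq_addl.
Qed.

Lemma poly_boundedM u v : poly_bounded u -> poly_bounded v -> poly_bounded (fun n => u n * v n).
Proof.
move=> [C [e hu]] [C' [e' hv]]; exists (C * C'), (e + e') => n.
by rewrite expnD mulnACA leq_mul.
Qed.

Lemma poly_bounded_const C : poly_bounded (fun=> C).
Proof. by exists C, 0 => n; rewrite muln1. Qed.

Lemma poly_boundedS u : poly_bounded u -> poly_bounded (fun n => (u n).+1).
Proof.
move=> hu; apply: poly_bounded_le (poly_boundedD hu (poly_bounded_const 1)) => n.
by rewrite addn1.
Qed.

Lemma poly_bounded_expn k : poly_bounded (fun n => n ^ k).
Proof. by exists 1, k => n; rewrite mul1n leq_expn2r ?leq_addr. Qed.

Theorem lemma5p2 (f : forall n : nat, {mpoly CC[n]}) :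
  (exists k : nat, forall n : nat, (mdegree (f n) <= n ^ k + k)%N) ->
  (exists k : nat, forall n : nat, exists c : circuit n,
      constant_free c /\ computes c (f n) /\ (csize c <= n ^ k + k)%N) ->
  exists k : nat, forall n : nat, exists c : circuit n,
      constant_free c /\ almost_MD c /\ computes c (f n) /\ (csize c <= n ^ k + k)%N.
Proof.
move=> [k2 deg_f] [k1 circuit_f].
pose D n := n ^ k2 + k2; pose A n := n ^ k1 + k1.
have /poly_bounded_leq_expn_add [K bound] :
    poly_bounded (fun n => (A n * slots_per_gate (D n)).+1 * ((D n).+3 + A n)).
  rewrite /A /D /slots_per_gate.
  by repeat first [apply: poly_boundedM | apply: poly_boundedD | apply: poly_boundedS
    | apply: poly_bounded_expn | apply: poly_bounded_const].
exists K => n; have [c [cf [[wf out] size_c]]] := circuit_f n.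
have topc := well_formed_topological wf.
have c0 : 0 < size c by case/andP: wf.
have deg_c : msize (output c) <= (D n).+1 by have := deg_f n; rewrite -out /mdegree /D; lia.
exists (homogenized c (D n)); split; first exact: homogenized_constant_free.
split; first exact: homogenized_almost_MD.
split; first by split; [exact: homogenized_well_formed | rewrite output_homogenized].
apply: leq_trans (csize_homogenized _ _) (leq_trans _ (bound n)).
have size_le : size c <= A n by apply: leq_trans size_c; rewrite leq_addr.
by apply: leq_mul; rewrite ?leq_add2l // ltnS leq_mul2r size_le orbT.
Qed.
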